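(* Let $F$ be a graph and $C$ a cycle of $F$ such that $(F,C)$ forms a conflict path. Then every vertex of $C$ is an attachment of at most two $C$-bridges.
   Context: Let $F$ be a graph and $C$ a cycle of $F$. A $C$-bridge is either a chord of $C$ (an edge not in $C$ with both endpoints on $C$) or a connected component of $F-V(C)$ together with all edges joining it to $C$ and their endpoints on $C$. The attachments $\mathrm{att}(X)$ of a $C$-bridge $X$ are the vertices of $C$ incident to edges of $X$. Two pairs $\{x,y\}$, $\{u,v\}$ of four distinct vertices of $C$ alternate if each of the two arcs of $C$ with endpoints $x,y$ contains exactly one of $u,v$; two vertex sets alternate if some pair from one alternates with some pair from the other. Two $C$-bridges conflict if they share at least three attachments or their attachment sets alternate; the conflict graph $\mathrm{Con}(C)$ has the $C$-bridges as vertices, two adjacent iff they conflict. The pair $(F,C)$ forms a conflict path if every $C$-bridge has exactly two attachments and $\mathrm{Con}(C)$ is a path. *)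

From mathcomp Require Import all_boot.
Set Implicit Arguments. Unset Strict Implicit. Unset Printing Implicit Defensive.

Section Bridges.
Variables (T : finType) (e : rel T) (c : seq T).

Definition simple_graph := symmetric e /\ irreflexive e.

Definition is_cycle := [&& 3 <= size c, uniq c & cycle e c].

Definition cycle_edge (x y : T) :=
  [&& x \in c, y \in c & (next c x == y) || (next c y == x)].

Definition eoff := [rel x y | [&& e x y, x \notin c & y \notin c]].

Definition comp (x : T) : {set T} := [set y | connect eoff x y].

Definition attK (K : {set T}) : {set T} :=
  [set v | (v \in c) && [exists u in K, e u v]].

(* A C-bridge is encoded by its vertex set:
   - a chord xy: the set {x,y};
   - a component K of F - V(C): the set K together with its attachments. *)
Definition is_chord (B : {set T}) :=
  [exists x, exists y, [&& B == [set x; y], e x y, x \in c, y \in c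
                       & ~~ cycle_edge x y]].
Definition is_comp_bridge (B : {set T}) :=
  [exists x, (x \notin c) && (B == comp x :|: attK (comp x))].
Definition is_bridge (B : {set T}) := is_chord B || is_comp_bridge B.

Definition att (B : {set T}) : {set T} := B :&: [set v | v \in c].

Definition arc1 (x y : T) := rcons (arc c x y) y.
Definition arc2 (x y : T) := rcons (arc c y x) x.

Definition alt_pairs (x y u v : T) :=
  [&& uniq [:: x; y; u; v], all (mem c) [:: x; y; u; v],
      ((u \in arc1 x y) + (v \in arc1 x y) == 1)
    & ((u \in arc2 x y) + (v \in arc2 x y) == 1)].

Definition alt_sets (A B : {set T}) :=
  [exists x in A, exists y in A, exists u in B, exists v in B, alt_pairs x y u v].

Definition conflict (X Y : {set T}) :=
  (2 < #|att X :&: att Y|) || alt_sets (att X) (att Y).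

Definition consecutive (s : seq {set T}) (X Y : {set T}) :=
  ((X, Y) \in zip s (behead s)) || ((Y, X) \in zip s (behead s)).

(* The conflict graph (vertices: C-bridges, edges: conflicting distinct
   pairs) is a path: its vertices can be listed without repetition so that
   two distinct bridges conflict iff they are consecutive. *)
Definition conflict_graph_is_path :=
  exists s : seq {set T},
    [/\ uniq s, forall B, (B \in s) = is_bridge B &
        forall X Y, is_bridge X -> is_bridge Y -> X != Y ->
          conflict X Y = consecutive s X Y].

Definition conflict_path :=
  (forall B, is_bridge B -> #|att B| = 2) /\ conflict_graph_is_path.

End Bridges.

From mathcomp Require Import all_boot.
From mathcomp Require Import zify.
Set Implicit Arguments. Unset Strict Implicit. Unset Printing Implicit Defensive.

(* Number the vertices of C by their position along C starting from v, so
   that v has position 0.  Every bridge B has exactly two attachments, hence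
   determines an interval [lo B, hi B] of positions, and two such bridges
   conflict exactly when their intervals cross (lo < lo' < hi < hi' or
   symmetrically), since cyclic alternation of four points becomes interval
   crossing once the cycle is cut at v.  Listing the bridges along the
   conflict path, we obtain intervals I_0, ..., I_(N-1) where I_i and I_j
   cross iff |i - j| = 1.  The combinatorial core (section
   CrossingIntervalPaths) shows that in such a family at most two intervals
   start at 0: a crossing-connected run of intervals that all avoid crossing
   a fixed interval q stays on one side of q (inside it or not), and this
   rules out three intervals anchored at 0.  The bridges attached at v are
   exactly those whose interval starts at 0, which gives the theorem. *)

Definition cross_nat (l h l' h' : nat) :=
  (l < l' < h) && (h < h') || (l' < l < h') && (h' < h).

Definition cyc_between (a b k : nat) := (a < k < b) || (b < a < k) || (k < b < a).

Definition alternate_idx (x y u w : nat) :=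
  [&& x != y, x != u, x != w, y != u, y != w, u != w,
      cyc_between x y u + cyc_between x y w == 1
    & cyc_between y x u + cyc_between y x w == 1].

Lemma alternate_idxE a b u w :
  alternate_idx a b u w = cross_nat (minn a b) (maxn a b) (minn u w) (maxn u w).
Proof.
rewrite /alternate_idx /cyc_between /cross_nat.
by case: (ltngtP a b) => ab; case: (ltngtP u w) => uw; apply/idP/idP; lia.
Qed.

Section CrossingIntervalPaths.
Variables (N : nat) (lo hi : nat -> nat).
Definition crossing i j := cross_nat (lo i) (hi i) (lo j) (hi j).
Definition inside q k := (lo q <= lo k) && (hi k <= hi q).
Hypothesis lo_lt_hi : forall i, i < N -> lo i < hi i.
Hypothesis crossingE : forall i j, i < N -> j < N -> i != j ->
  crossing i j = (i == j.+1) || (j == i.+1).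

Lemma crossingC i j : crossing i j = crossing j i.
Proof. by rewrite /crossing /cross_nat; apply/idP/idP; lia. Qed.

Lemma crossing_same_side q a b : q < N -> a < N -> b < N ->
  ~~ crossing q a -> ~~ crossing q b -> crossing a b -> inside q a = inside q b.
Proof.
move=> /lo_lt_hi ? /lo_lt_hi ? /lo_lt_hi ?; rewrite /crossing /cross_nat /inside.
by move=> *; apply/idP/idP; lia.
Qed.

Lemma far_not_crossing i j : i < N -> j < N -> i.+1 < j -> ~~ crossing i j.
Proof. by move=> iN jN ij; rewrite crossingE //; lia. Qed.

(* A run of consecutive intervals that all avoid crossing q stays on one side
   of q, since consecutive intervals cross. *)
Lemma side_constant q i j : q < N -> j < N -> i <= j ->
  (forall k, i <= k <= j -> ~~ crossing q k) -> inside q i = inside q j.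
Proof.
move=> qN; elim: j => [|j IH] jN ij nq; first by have -> : i = 0 by lia.
have [lt|->//] : i < j.+1 \/ i = j.+1 by lia.
have jN' : j < N by lia.
rewrite (IH jN') //; last by move=> k hk; apply: nq; lia.
apply: crossing_same_side => //; try by apply: nq; lia.
by rewrite crossingE ?eqxx ?orbT //; lia.
Qed.

(* The neighbours p, n of the
   middle one both cross it, hence start after 0, and they do not cross each
   other, so they are nested.  If n is nested in p, the run n, ..., M avoids
   crossing p, so M is nested in p; if p is nested in n, the run m, ..., p
   avoids crossing n, so m is nested in n.  Both contradict the fact that an
   interval starting at 0 is not nested in one starting after 0. *)
Lemma no_three_anchored m mid M : m < mid < M -> M < N ->
  lo m = 0 -> lo mid = 0 -> lo M = 0 -> False.
Proof.
move=> /andP[m_mid mid_M] MN lm lmid lM.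
pose p := mid.-1; pose n := mid.+1.
have [pN nN midN] : [/\ p < N, n < N & mid < N] by rewrite /p /n; split; lia.
have c_p : crossing mid p by rewrite crossingE //; lia.
have c_n : crossing mid n by rewrite crossingE //; lia.
have nc_pn : ~~ crossing p n by apply: far_not_crossing; lia.
have := lo_lt_hi pN; have := lo_lt_hi nN; have := lo_lt_hi midN.
move: c_p c_n nc_pn; rewrite /crossing /cross_nat => c_p c_n nc_pn lh_mid lh_n lh_p.
have [in_pn|in_np] : inside p n \/ inside n p by rewrite /inside; lia.
- have : inside p n = inside p M.
    apply: side_constant => //; try lia.
    by move=> k hk; apply: far_not_crossing => //; lia.
  by rewrite in_pn /inside lM => /esym; lia.
- have : inside n m = inside n p.
    apply: side_constant => //; try lia.
    by move=> k hk; rewrite crossingC; apply: far_not_crossing; lia.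
  by rewrite in_np /inside lm; lia.
Qed.

Lemma at_most_two_anchored : #|[set k : 'I_N | lo k == 0]| <= 2.
Proof.
rewrite leqNgt; apply/card_gt2P => -[i [j [k [[]]]]].
rewrite !inE => /eqP li /eqP lj /eqP lk [ij jk ki].
have no3 (a b d : 'I_N) : a < b < d -> lo a = 0 -> lo b = 0 -> lo d = 0 -> False.
  by move=> abd la lb ld; exact: (no_three_anchored abd (ltn_ord d)).
move: ij jk ki; rewrite -!(inj_eq val_inj) /= => ij jk ki.
have : [|| i < j < k, i < k < j, j < i < k, j < k < i, k < i < j | k < j < i] by lia.
case/or4P => [o|o|o|/orP[o|/orP[o|o]]].
- exact: (no3 i j k).
- exact: (no3 i k j).
- exact: (no3 j i k).
- exact: (no3 j k i).
- exact: (no3 k i j).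
- exact: (no3 k j i).
Qed.
End CrossingIntervalPaths.

Section ArcIndex.
Variable T : eqType.

Lemma index_rot (p : seq T) i z : uniq p -> i <= size p -> z \in p ->
  index z (rot i p) =
    if i <= index z p then index z p - i else index z p + (size p - i).
Proof.
move=> up ip zp; have zlt : index z p < size p by rewrite index_mem.
have urot : uniq (rot i p) by rewrite rot_uniq.
case: leqP => iz.
- have nz : nth z (rot i p) (index z p - i) = z.
    rewrite /rot nth_cat size_drop.
    have -> : index z p - i < size p - i by lia.
    by rewrite nth_drop subnKC // nth_index.
  by rewrite -{1}nz index_uniq // size_rot; lia.
- have nz : nth z (rot i p) (index z p + (size p - i)) = z.
    rewrite /rot nth_cat size_drop.
    have -> : index z p + (size p - i) < size p - i = false by lia.
    by rewrite addnK nth_take // nth_index.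
  by rewrite -{1}nz index_uniq // size_rot; lia.
Qed.

Lemma mem_arc_index (p : seq T) x y z : uniq p -> x \in p -> y \in p -> z \in p ->
  z != x -> z != y -> x != y ->
  (z \in arc p x y) = cyc_between (index x p) (index y p) (index z p).
Proof.
move=> up xp yp zp zx zy xy.
have idx_neq a b : a \in p -> b \in p -> a != b -> index a p != index b p.
  by move=> ap bp; rewrite (inj_in_eq (@index_inj _ a p)).
have := idx_neq _ _ zp xp zx; have := idx_neq _ _ zp yp zy.
have := idx_neq _ _ xp yp xy.
have := index_mem x p; have := index_mem y p; have := index_mem z p.
rewrite xp yp zp => zlt ylt xlt ? ? ?.
rewrite /arc in_take ?mem_rot // !index_rot // ?(ltnW xlt) //.
by case: (leqP (index x p) (index z p)); case: (leqP (index x p) (index y p));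
  rewrite /cyc_between; lia.
Qed.
End ArcIndex.

Section RotatedPositions.
Variables (T : finType) (c : seq T) (v : T).
Hypotheses (uc : uniq c) (vc : v \in c).

Definition pos (z : T) := index z (rot (index v c) c).

Lemma pos_base : pos v = 0.
Proof. by rewrite /pos rot_index // index_head. Qed.

Lemma pos_eq x y : x \in c -> y \in c -> (pos x == pos y) = (x == y).
Proof.
move=> xc yc; apply: (inj_in_eq (@index_inj _ x _)); by rewrite mem_rot.
Qed.

Lemma mem_arc_pos x y z : x \in c -> y \in c -> z \in c ->
  z != x -> z != y -> x != y -> (z \in arc c x y) = cyc_between (pos x) (pos y) (pos z).
Proof.
move=> xc yc zc zx zy xy.
by rewrite -(arc_rot (index v c) uc xc) mem_arc_index ?mem_rot ?rot_uniq.
Qed.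

Lemma alt_pairs_pos x y u w : x \in c -> y \in c -> u \in c -> w \in c ->
  alt_pairs c x y u w = alternate_idx (pos x) (pos y) (pos u) (pos w).
Proof.
move=> xc yc uc' wc.
rewrite /alt_pairs /alternate_idx /= !inE xc yc uc' wc /= !negb_or -!andbA !pos_eq //.
case: (x =P y) => //= /eqP xy; case: (x =P u) => //= /eqP xu.
case: (x =P w) => //= /eqP xw; case: (y =P u) => //= /eqP yu.
case: (y =P w) => //= /eqP yw; case: (u =P w) => //= /eqP uw.
rewrite /arc1 /arc2 !mem_rcons !in_cons ![u == _]eq_sym ![w == _]eq_sym.
by rewrite (negbTE yu) (negbTE yw) (negbTE xu) (negbTE xw) /= !mem_arc_pos // eq_sym.
Qed.
End RotatedPositions.

Section BridgeIntervals.
Variables (T : finType) (c : seq T) (v : T).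
Hypotheses (uc : uniq c) (vc : v \in c).

Definition att1 (B : {set T}) := nth v (enum (att c B)) 0.
Definition att2 (B : {set T}) := nth v (enum (att c B)) 1.

Lemma att_pair B : #|att c B| = 2 -> att1 B != att2 B /\ att c B = [set att1 B; att2 B].
Proof.
rewrite /att1 /att2; have := mem_enum (att c B); have := enum_uniq (att c B).
rewrite cardE; case: (enum (att c B)) => [|a [|b [|]]] //= + + _.
rewrite !inE andbT => ab me; split => //; apply/setP => z.
by rewrite -me !inE.
Qed.

Lemma att_on_cycle B z : z \in att c B -> z \in c.
Proof. by rewrite !inE => /andP[_]. Qed.

Lemma att12_on_cycle B : #|att c B| = 2 -> att1 B \in c /\ att2 B \in c.
Proof.
by move=> /att_pair[_ eB]; split; apply: (@att_on_cycle B); rewrite eB ?set21 ?set22.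
Qed.

Definition att_lo B := minn (pos c v (att1 B)) (pos c v (att2 B)).
Definition att_hi B := maxn (pos c v (att1 B)) (pos c v (att2 B)).

Lemma att_lo_lt_hi B : #|att c B| = 2 -> att_lo B < att_hi B.
Proof.
move=> h; have [ne _] := att_pair h; have [ac bc] := att12_on_cycle h.
have : pos c v (att1 B) != pos c v (att2 B) by rewrite pos_eq.
by rewrite /att_lo /att_hi; lia.
Qed.

Lemma att_lo_base B : #|att c B| = 2 -> v \in att c B -> att_lo B = 0.
Proof.
rewrite /att_lo => /att_pair[_ ->] /set2P[] <-; rewrite pos_base //; lia.
Qed.

(* Two bridges with two attachments each conflict iff their intervals cross:
   they cannot share three attachments, and alternation is crossing. *)
Lemma conflict_cross X Y : #|att c X| = 2 -> #|att c Y| = 2 ->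
  conflict c X Y = cross_nat (att_lo X) (att_hi X) (att_lo Y) (att_hi Y).
Proof.
move=> hX hY; rewrite /conflict.
have -> : (2 < #|att c X :&: att c Y|) = false.
  by apply/negbTE; rewrite -leqNgt -hX subset_leq_card ?subsetIl.
have [_ eX] := att_pair hX; have [_ eY] := att_pair hY.
have [aX bX] := att12_on_cycle hX; have [aY bY] := att12_on_cycle hY.
rewrite /= /alt_sets eX eY /att_lo /att_hi.
apply/idP/idP.
- case/existsP => x /andP[/set2P hx /existsP[y /andP[/set2P hy]]].
  case/existsP => u /andP[/set2P hu /existsP[w /andP[/set2P hw]]].
  by case: hx => ->; case: hy => ->; case: hu => ->; case: hw => ->;
    rewrite (alt_pairs_pos v) // alternate_idxE /cross_nat; lia.
- move=> H; apply/existsP; exists (att1 X); rewrite set21 /=.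
  apply/existsP; exists (att2 X); rewrite set22 /=.
  apply/existsP; exists (att1 Y); rewrite set21 /=.
  apply/existsP; exists (att2 Y); rewrite set22 /=.
  by rewrite (alt_pairs_pos v) // alternate_idxE.
Qed.
End BridgeIntervals.

Lemma mem_zip_behead_nth (A : eqType) (s : seq A) x0 i j :
  uniq s -> i < size s -> j < size s ->
  ((nth x0 s i, nth x0 s j) \in zip s (behead s)) = (j == i.+1).
Proof.
move=> us hi hj; apply/idP/idP.
- case/(nthP (x0, x0)) => k; rewrite size_zip size_behead => hk.
  rewrite nth_zip_cond size_zip size_behead hk nth_behead /= => [[e1 e2]].
  move/eqP: e1; rewrite nth_uniq //; last by lia.
  move/eqP: e2; rewrite nth_uniq //; last by lia.
  by move=> /eqP <- /eqP ->.
- move/eqP=> ji; have iz : i < size (zip s (behead s)) by rewrite size_zip size_behead; lia.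
  apply/(nthP (x0, x0)); exists i => //.
  by rewrite nth_zip_cond iz nth_behead ji.
Qed.

Section ConflictPathPositions.
Variables (T : finType) (e : rel T) (c : seq T) (v : T) (s : seq {set T}).
Hypotheses (uc : uniq c) (vc : v \in c).
Hypothesis two_att : forall B, is_bridge e c B -> #|att c B| = 2.
Hypotheses (us : uniq s) (bridge_s : forall B, (B \in s) = is_bridge e c B).
Hypothesis conflictE : forall X Y, is_bridge e c X -> is_bridge e c Y -> X != Y ->
  conflict c X Y = consecutive s X Y.

Let lo_at k := att_lo c v (nth set0 s k).
Let hi_at k := att_hi c v (nth set0 s k).

Lemma nth_bridge k : k < size s -> is_bridge e c (nth set0 s k).
Proof. by move=> ks; rewrite -bridge_s mem_nth. Qed.

Lemma lo_at_lt_hi_at k : k < size s -> lo_at k < hi_at k.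
Proof. by move=> ks; apply/att_lo_lt_hi/two_att/nth_bridge. Qed.

Lemma crossing_at i j : i < size s -> j < size s -> i != j ->
  crossing lo_at hi_at i j = (i == j.+1) || (j == i.+1).
Proof.
move=> iN jN ij.
rewrite /crossing /lo_at /hi_at -conflict_cross ?two_att ?nth_bridge //.
by rewrite conflictE ?nth_bridge ?nth_uniq // /consecutive !mem_zip_behead_nth // orbC.
Qed.

Lemma bridges_at_base : #|[set B | is_bridge e c B & v \in att c B]| <= 2.
Proof.
apply: leq_trans (at_most_two_anchored lo_at_lt_hi_at crossing_at).
apply: leq_trans (leq_imset_card (fun k : 'I_(size s) => nth set0 s k) _).
apply: subset_leq_card; apply/subsetP => B; rewrite inE => /andP[bB vB].
have Bi : index B s < size s by rewrite index_mem bridge_s.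
have nth_B : nth set0 s (index B s) = B by rewrite nth_index ?bridge_s.
apply/imsetP; exists (Ordinal Bi) => //.
by rewrite inE /lo_at /= nth_B att_lo_base ?two_att.
Qed.
End ConflictPathPositions.

Theorem lemma24 (T : finType) (e : rel T) (c : seq T) :
  simple_graph e -> is_cycle e c -> conflict_path e c ->
  forall v, v \in c ->
    #|[set B : {set T} | is_bridge e c B & v \in att c B]| <= 2.
Proof.
move=> _ /and3P[_ uc _] [two_att [s [us bridge_s conflictE]]] v vc.
exact: (bridges_at_base uc vc two_att us bridge_s conflictE).
Qed.
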